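(* If $\sigma_2(G)\le\sigma_2(H)$, then for every integer $0\le i\le s-1$, $$\sigma_2\big((I\otimes A_H)\,G_i\,(I\otimes A_H)\big)\le 2\,\sigma_2(H).$$
   Context: $G$ is a $d_1$-regular undirected graph on $[n]$ with normalized adjacency matrix $A_G$ and a locally invertible rotation map $\mathrm{rot}_G$ ($\mathrm{rot}_G(v,j)=(v',j')$ iff $v'$ is the $j$-th neighbour of $v$ and $v$ is the $j'$-th neighbour of $v'$, with $j'=\varphi(j)$ for a fixed bijection $\varphi$ of $[d_1]$). $H$ is a $d_2$-regular undirected graph on $[d_1]^s$ with normalized adjacency matrix $A_H$. $\mathrm{Rot}_i$ sends $(v,(a_0,\dots,a_{s-1}))$ to $(v',(a_0,\dots,a_i',\dots,a_{s-1}))$ where $(v',a_i')=\mathrm{rot}_G(v,a_i)$, and $G_i$ is its permutation matrix on $\mathbb R^{V(G)}\otimes\mathbb R^{V(H)}$. $\sigma_2$ denotes the second largest singular value; $\sigma_2(G)=\sigma_2(A_G)$, $\sigma_2(H)=\sigma_2(A_H)$. *)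

From HB Require Import structures.
From mathcomp Require Import all_boot all_order all_algebra all_fingroup.
Set Implicit Arguments. Unset Strict Implicit. Unset Printing Implicit Defensive.
Import Order.TTheory GRing.Theory Num.Theory.
Local Open Scope ring_scope.

(* A square real matrix indexed by an arbitrary finite type T, turned into a
   MathComp matrix by enumerating T (singular values do not depend on the
   enumeration). *)
Definition mx_of (R : nzRingType) (T : finType) (f : T -> T -> R) : 'M[R]_#|T| :=
  \matrix_(i, j) f (enum_val i) (enum_val j).

(* s is the list of singular values of M (with multiplicity), sorted
   non-increasingly: the squares of the entries of s are exactly the
   eigenvalues (roots of the characteristic polynomial, with multiplicity)
   of M^T M. *)
Definition singular_values (R : rcfType) (N : nat) (M : 'M[R]_N) (s : seq R) :=
  [/\ sorted (fun x y : R => y <= x) s,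
      all (fun x : R => 0 <= x) s &
      char_poly (M^T *m M) = \prod_(x <- s) ('X - (x ^+ 2)%:P)].

Definition sigma2_of (R : rcfType) (s : seq R) : R := s`_1.

(* Normalized adjacency matrix of the d1-regular graph G on [n] given by its
   rotation map rot : [n] x [d1] -> [n] x [d1]. *)
Definition adjG (R : rcfType) (n d1 : nat) (rot : 'I_n * 'I_d1 -> 'I_n * 'I_d1)
  (v w : 'I_n) : R :=
  #|[set j : 'I_d1 | (rot (v, j)).1 == w]|%:R / d1%:R.

Definition Hvert (d1 s : nat) := {ffun 'I_s -> 'I_d1}.

(* Normalized adjacency matrix of the d2-regular (multi)graph H given by its
   symmetric edge-multiplicity matrix E. *)
Definition adjH (R : rcfType) (d1 s d2 : nat) (E : Hvert d1 s -> Hvert d1 s -> nat)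
  (a b : Hvert d1 s) : R := (E a b)%:R / d2%:R.

Definition Rot (n d1 s : nat) (rot : 'I_n * 'I_d1 -> 'I_n * 'I_d1) (i : 'I_s)
  (x : 'I_n * Hvert d1 s) : 'I_n * Hvert d1 s :=
  let r := rot (x.1, x.2 i) in
  (r.1, [ffun k => if k == i then r.2 else x.2 k]).

Definition Gi (R : rcfType) (n d1 s : nat) (rot : 'I_n * 'I_d1 -> 'I_n * 'I_d1)
  (i : 'I_s) (x y : 'I_n * Hvert d1 s) : R :=
  (Rot rot i x == y)%:R.

Definition IkronH (R : rcfType) (n d1 s d2 : nat) (E : Hvert d1 s -> Hvert d1 s -> nat)
  (x y : 'I_n * Hvert d1 s) : R :=
  (x.1 == y.1)%:R * adjH R d2 E x.2 y.2.

Definition zigzag_i (R : rcfType) (n d1 s d2 : nat) (rot : 'I_n * 'I_d1 -> 'I_n * 'I_d1)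
  (E : Hvert d1 s -> Hvert d1 s -> nat) (i : 'I_s) (x y : 'I_n * Hvert d1 s) : R :=
  \sum_(z : 'I_n * Hvert d1 s) \sum_(w : 'I_n * Hvert d1 s)
     IkronH R d2 E x z * Gi R rot i z w * IkronH R d2 E w y.

From HB Require Import structures.
From mathcomp Require Import all_boot all_order all_algebra all_fingroup.
From mathcomp Require Import sesquilinear spectral.
From mathcomp.real_closed Require Import complex.
From mathcomp Require Import ring lra.
Import Order.TTheory GRing.Theory Num.Theory.
Set Implicit Arguments. Unset Strict Implicit. Unset Printing Implicit Defensive.
Local Open Scope ring_scope.

(* Let x be a function on V(G) x V(H) with zero sum and split x = p + r, where
   p is the cloud mean of x (constant on each cloud {v} x V(H)) and r has zero
   mean on every cloud.  As I (x) A_H fixes p,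
     M x = (I (x) A_H) G_i p + (I (x) A_H) G_i (I (x) A_H) r.
   In the first term, I (x) A_H keeps the cloud means of G_i p and shrinks the
   rest by lam; those cloud means are A_G applied to the means of x (the i-th
   coordinate of a vertex of H is equidistributed), which shrink by
   sigma2(G) <= lam.  So its squared norm is at most 2 lam^2 |p|^2.  The
   second term has squared norm at most lam^2 |r|^2, since G_i is a
   permutation and I (x) A_H contracts.  Hence |M x|^2 <= 4 lam^2 |x|^2.

   Singular values are related to such norm bounds through the spectral
   theorem for the real symmetric matrix M^T M, obtained from the complex
   spectral theorem: second_eigenvalue_le is the easy half of Courant-Fischer,
   and orth_quad_le_second bounds the Rayleigh quotient on the orthogonal
   complement of the top eigenvector of a doubly stochastic contraction. *)

Lemma char_poly_conj (F : comNzRingType) n (P Q D : 'M[F]_n) :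
  Q *m P = 1%:M -> char_poly (Q *m D *m P) = char_poly D.
Proof.
move=> QP; rewrite /char_poly /char_poly_mx.
set Pp := map_mx polyC P; set Qp := map_mx polyC Q.
have QPp : Qp *m Pp = 1%:M by rewrite -map_mxM QP map_scalar_mx.
have -> : 'X%:M - map_mx polyC (Q *m D *m P) =
  Qp *m ('X%:M - map_mx polyC D) *m Pp.
  rewrite !map_mxM mulmxBr mulmxBl -/Pp -/Qp; congr (_ - _).
  by rewrite -mulmxA -scalar_mxC mulmxA QPp mul1mx.
by rewrite !det_mulmx mulrAC -det_mulmx QPp det1 mul1r.
Qed.

Lemma count_gt_second (R : realDomainType) (t : seq R) :
  sorted (fun x y => y <= x) t -> (count (fun w => (t`_1 < w)%R) t <= 1)%N.
Proof.
case: t => [|a [|b r]] //=; first by rewrite addn0 leq_b1.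
move=> /andP [_ path_br].
have r_le_b : all (fun w => w <= b) r.
  apply: (order_path_min (leT := fun x y => y <= x)) path_br.
  by move=> x y z yx zy; exact: le_trans zy yx.
rewrite ltxx add0n (eq_in_count (a2 := pred0)) ?count_pred0 ?addn0 ?leq_b1 //.
by move=> w /(allP r_le_b) wb /=; rewrite ltNge wb.
Qed.

Section Complexification.
(* Quadratic forms of a real symmetric matrix on complex vectors reduce to the
   real forms at the real and imaginary parts; this transfers real bounds to
   the complexification used by the spectral theorem. *)
Variables (R : rcfType) (N : nat).
Local Notation C := (R[i]).
Local Notation toC := (real_complex R).
Local Notation re x := (map_mx (@complex.Re R) x).
Local Notation im x := (map_mx (@complex.Im R) x).
Local Open Scope sesquilinear_scope.

Lemma row_re_im (x : 'rV[C]_N) : x = map_mx toC (re x) + 'i *: map_mx toC (im x).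
Proof. by apply/rowP => k; rewrite !mxE -complexiE -complexE. Qed.

Lemma row_re_im_conj (x : 'rV[C]_N) :
  x^t* = (map_mx toC (re x))^T - 'i *: (map_mx toC (im x))^T.
Proof.
apply/matrixP => k l; rewrite !mxE.
by case: (x l k) => a b /=; rewrite -complexiE; simpc.
Qed.

Lemma conj_real_row (y : 'rV[R]_N) : (map_mx toC y)^t* = map_mx toC y^T.
Proof. by apply/matrixP => k l; rewrite !mxE; apply: conjc_real. Qed.

Lemma quad_re_im (Q : 'M[R]_N) : Q^T = Q -> forall x : 'rV[C]_N,
  (x *m map_mx toC Q *m x^t*) 0 0 =
  toC ((re x *m Q *m (re x)^T) 0 0 + (im x *m Q *m (im x)^T) 0 0).
Proof.
move=> Q_sym x; rewrite row_re_im_conj {1}[x]row_re_im.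
set a := re x; set b := im x.
have real_form (y z : 'rV[R]_N) : map_mx toC y *m map_mx toC Q *m (map_mx toC z)^T
   = map_mx toC (y *m Q *m z^T) by rewrite map_trmx -!map_mxM.
have cross : (b *m Q *m a^T) 0 0 = (a *m Q *m b^T) 0 0.
  have : (b *m Q *m a^T)^T = a *m Q *m b^T by rewrite !trmx_mul trmxK Q_sym mulmxA.
  by move/(congr1 (fun M : 'M[R]_1 => M 0 0)); rewrite mxE.
rewrite !mulmxDl !mulmxBr -!scalemxAl -!scalemxAr !real_form.
rewrite !mxE in cross; rewrite !mxE cross rmorphD mulrA -expr2 sqrCi mulN1r opprK.
by rewrite addrA subrK.
Qed.

Lemma orth_re_im (u : 'rV[R]_N) (x : 'rV[C]_N) :
  (x *m (map_mx toC u)^T) 0 0 = 0 ->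
  (re x *m u^T) 0 0 = 0 /\ (im x *m u^T) 0 0 = 0.
Proof.
rewrite {1}[x]row_re_im mulmxDl -scalemxAl map_trmx -!map_mxM !mxE.
by rewrite -complexiE; simpc; case=> -> ->.
Qed.

Lemma complex_quad_bound (Q : 'M[R]_N) (u : 'rV[R]_N) (k : R) : Q^T = Q ->
  (forall y : 'rV[R]_N, (y *m u^T) 0 0 = 0 ->
      (y *m Q *m y^T) 0 0 <= k * (y *m y^T) 0 0) ->
  forall x : 'rV[C]_N, (x *m (map_mx toC u)^T) 0 0 = 0 ->
    (x *m map_mx toC Q *m x^t*) 0 0 <= toC k * (x *m x^t*) 0 0.
Proof.
move=> Q_sym hk x /orth_re_im [re_u im_u].
have -> : x *m x^t* = x *m map_mx toC 1%:M *m x^t*.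
  by rewrite map_scalar_mx /= rmorph1 mulmx1.
rewrite !quad_re_im ?trmx1 // -rmorphM lecR !mulmx1 mulrDr.
by apply: lerD; apply: hk.
Qed.

End Complexification.

Section RealSymmetricSpectrum.
(* A real symmetric matrix S is diagonalised by the unitary matrix P given by
   the complex spectral theorem applied to its complexification SC; the
   eigenvalues d are those of S. *)
Variable R : rcfType.
Local Notation C := (R[i]).
Local Notation toC := (real_complex R).
Variables (N : nat) (S : 'M[R]_N).
Hypothesis S_sym : S^T = S.
Local Notation SC := (map_mx toC S).
Local Open Scope sesquilinear_scope.
Local Notation P := (spectralmx SC).
Local Notation d := (spectral_diag SC).
Local Notation coord x := (x *m P^t*).

Lemma SC_normal : SC \is normalmx.
Proof.
apply: symmetric_normalmx.
  by apply/is_hermitianmxP; rewrite expr0 scale1r map_mx_id // map_trmx S_sym.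
by apply/mxOverP => i j; rewrite mxE; apply/complex_realP; exists (S i j).
Qed.

Lemma spectral_PPt : P *m P^t* = 1%:M.
Proof. exact/unitarymxP/spectral_unitarymx. Qed.

Lemma spectral_PtP : P^t* *m P = 1%:M.
Proof. exact/mulmx1C/spectral_PPt. Qed.

Lemma SC_diag : SC = P^t* *m diag_mx d *m P.
Proof.
rewrite -invmx_unitary ?spectral_unitarymx //.
exact/orthomx_spectralP/SC_normal.
Qed.

Lemma eigenvalues_perm (t : seq R) : char_poly S = \prod_(y <- t) ('X - y%:P) ->
  perm_eq [seq d 0 k | k <- enum 'I_N] [seq toC y | y <- t].
Proof.
move=> charS; apply: prod_XsubC_eq.
have charSC_t : char_poly SC = \prod_(y <- t) ('X - (toC y)%:P).
  rewrite -map_char_poly charS rmorph_prod; apply: eq_bigr => y _.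
  by rewrite rmorphB /= map_polyX map_polyC.
have charSC_d : char_poly SC = \prod_(k < N) ('X - (d 0 k)%:P).
  rewrite {1}SC_diag char_poly_conj ?spectral_PtP //.
  rewrite char_poly_trig ?diag_mx_is_trig //.
  by apply: eq_bigr => k _; rewrite mxE eqxx mulr1n.
by rewrite !big_map -charSC_t charSC_d.
Qed.

Lemma eigenvalue_real (t : seq R) : char_poly S = \prod_(y <- t) ('X - y%:P) ->
  forall k, exists2 z, z \in t & d 0 k = toC z.
Proof.
move=> charS k; have := perm_mem (eigenvalues_perm charS) (d 0 k).
by rewrite map_f ?mem_enum // => /esym /mapP [z zt ->]; exists z.
Qed.

Lemma count_eigenvalues (t : seq R) (a : pred C) :
  char_poly S = \prod_(y <- t) ('X - y%:P) ->
  #|[pred k : 'I_N | a (d 0 k)]| = count a [seq toC y | y <- t].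
Proof.
move=> charS; rewrite -(seq.permP (eigenvalues_perm charS)) count_map.
by rewrite -size_filter enumT cardE /enum_mem.
Qed.

Lemma inner_coord (x z : 'rV[C]_N) :
  (x *m z^t*) 0 0 = \sum_k coord x 0 k * (coord z 0 k)^*.
Proof.
have -> : x *m z^t* = coord x *m (coord z)^t*.
  by rewrite trmx_mul map_mxM trmxCK !mulmxA -(mulmxA x) spectral_PtP mulmx1.
by rewrite mxE; apply: eq_bigr => k _; rewrite !mxE.
Qed.

Lemma quad_coord (x : 'rV[C]_N) : (x *m SC *m x^t*) 0 0 =
  \sum_k d 0 k * (coord x 0 k * (coord x 0 k)^*).
Proof.
have -> : x *m SC *m x^t* = coord x *m diag_mx d *m (coord x)^t*.
  by rewrite [in LHS]SC_diag trmx_mul map_mxM trmxCK !mulmxA.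
rewrite mul_mx_diag mxE; apply: eq_bigr => k _; rewrite !mxE.
by rewrite mulrCA mulrA.
Qed.

Lemma quad_lower (x : 'rV[C]_N) (b : C) :
  (forall k, coord x 0 k != 0 -> b <= d 0 k) ->
  b * (x *m x^t*) 0 0 <= (x *m SC *m x^t*) 0 0.
Proof.
move=> hb; rewrite quad_coord inner_coord mulr_sumr; apply: ler_sum => k _.
have [->|nz] := eqVneq (coord x 0 k) 0; first by rewrite !mul0r !mulr0.
by apply: ler_wpM2r; [exact: mul_conjC_ge0 | exact: hb].
Qed.

Lemma quad_upper (x : 'rV[C]_N) (b : C) :
  (forall k, coord x 0 k != 0 -> d 0 k <= b) ->
  (x *m SC *m x^t*) 0 0 <= b * (x *m x^t*) 0 0.
Proof.
move=> hb; rewrite quad_coord inner_coord mulr_sumr; apply: ler_sum => k _.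
have [->|nz] := eqVneq (coord x 0 k) 0; first by rewrite !mul0r !mulr0.
by apply: ler_wpM2r; [exact: mul_conjC_ge0 | exact: hb].
Qed.

Lemma sqnorm_gt0 (x : 'rV[C]_N) k : coord x 0 k != 0 -> 0 < (x *m x^t*) 0 0.
Proof.
move=> nz; have sq_ge0 j : 0 <= coord x 0 j * (coord x 0 j)^* by exact: mul_conjC_ge0.
rewrite inner_coord lt_def sumr_ge0 ?andbT //.
apply/eqP => /(psumr_eq0P (fun j _ => sq_ge0 j)) /(_ k isT) /eqP.
by rewrite mul_conjC_eq0 (negbTE nz).
Qed.

Lemma coord_row (j : 'I_N) : coord (row j P) = row j 1%:M.
Proof. by rewrite -row_mul spectral_PPt. Qed.

Lemma eigenvalue_le (k : R) :
  (forall y : 'rV[R]_N, (y *m S *m y^T) 0 0 <= k * (y *m y^T) 0 0) ->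
  forall l, d 0 l <= toC k.
Proof.
move=> hk l; pose e := row l P.
have coord_e j : coord e 0 j = (l == j)%:R by rewrite coord_row !mxE.
have e_nz : coord e 0 l != 0 by rewrite coord_e eqxx oner_eq0.
have lower : d 0 l * (e *m e^t*) 0 0 <= (e *m SC *m e^t*) 0 0.
  apply: quad_lower => j; rewrite coord_e.
  by case: (eqVneq l j) => [<- _|_]; rewrite ?eqxx.
have e_orth0 : (e *m (map_mx toC (0 : 'rV[R]_N))^T) 0 0 = 0.
  by rewrite map_mx0 trmx0 mulmx0 mxE.
have upper := complex_quad_bound S_sym (fun y _ => hk y) e_orth0.
by have := le_trans lower upper; rewrite ler_pM2r // (sqnorm_gt0 e_nz).
Qed.

Lemma orth_combination (w : 'cV[C]_N) (k0 k1 : 'I_N) : k0 != k1 ->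
  exists2 x : 'rV[C]_N, (x *m w) 0 0 = 0 &
    (exists k, coord x 0 k != 0) /\
    (forall l, coord x 0 l != 0 -> (l == k0) || (l == k1)).
Proof.
move=> nk01; pose al j := (row j P *m w) 0 0.
have [[be0 be1] /= be_nz be_orth] : exists2 be : C * C,
    (be.1 != 0) || (be.2 != 0) & be.1 * al k0 + be.2 * al k1 = 0.
  have [al0|al_nz] := eqVneq (al k0) 0.
    by exists (1, 0); rewrite /= ?oner_eq0 // al0 mulr0 mul0r addr0.
  by exists (al k1, - al k0); rewrite /= ?oppr_eq0 ?al_nz ?orbT // mulrC mulNr subrr.
pose x := be0 *: row k0 P + be1 *: row k1 P.
have coord_x l : coord x 0 l = be0 * (k0 == l)%:R + be1 * (k1 == l)%:R.
  by rewrite mulmxDl -!scalemxAl !coord_row !mxE.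
exists x; first by move: be_orth; rewrite /al mulmxDl -!scalemxAl !mxE.
split => [|l]; last first.
  rewrite coord_x; case: (k0 =P l) => [->|_]; first by rewrite eqxx.
  by case: (k1 =P l) => [->|_]; rewrite ?eqxx ?orbT // !mulr0 addr0 eqxx.
case/orP: be_nz => nz; [exists k0 | exists k1]; rewrite coord_x eqxx.
  by rewrite [k1 == k0]eq_sym (negbTE nk01) mulr0 addr0 mulr1.
by rewrite (negbTE nk01) mulr0 add0r mulr1.
Qed.

(* Easy half of the Courant-Fischer theorem: a Rayleigh-quotient bound k on
   the orthogonal complement of a single vector bounds the second largest
   eigenvalue. *)
Theorem second_eigenvalue_le (t : seq R) (u : 'rV[R]_N) (k : R) :
  char_poly S = \prod_(y <- t) ('X - y%:P) -> sorted (fun x y => y <= x) t ->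
  0 <= k ->
  (forall y : 'rV[R]_N, (y *m u^T) 0 0 = 0 ->
      (y *m S *m y^T) 0 0 <= k * (y *m y^T) 0 0) ->
  t`_1 <= k.
Proof.
move=> charS t_sorted k_ge0 hk.
case: t charS t_sorted => [|a [|b r]] charS t_sorted; rewrite ?nth_nil //=.
have b_le_a : b <= a by case/andP: t_sorted.
have : (1 < #|[pred j : 'I_N | (toC b <= d 0 j)%R]|)%N.
  rewrite (count_eigenvalues _ charS) /= !lecR b_le_a lexx.
  by rewrite add1n addSn ltnS ltnS leq_addr.
case/card_gt1P => [k0 [k1 [hk0 hk1 nk01]]]; rewrite !inE in hk0 hk1.
have [x x_orth [[l x_nz] x_supp]] := orth_combination (map_mx toC u)^T nk01.
have lower : toC b * (x *m x^t*) 0 0 <= (x *m SC *m x^t*) 0 0.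
  by apply: quad_lower => j /x_supp /orP [] /eqP ->.
have upper := complex_quad_bound S_sym hk x_orth.
by have := le_trans lower upper; rewrite ler_pM2r ?lecR // (sqnorm_gt0 x_nz).
Qed.

Lemma eigenvector_coord (u : 'rV[R]_N) (a : R) : u *m S = a *: u ->
  forall j, coord (map_mx toC u) 0 j * d 0 j = toC a * coord (map_mx toC u) 0 j.
Proof.
move=> uS j; set c := coord _.
have : c *m diag_mx d = toC a *: c.
  rewrite /c -[LHS]mulmx1 -spectral_PPt !mulmxA.
  by rewrite -2!(mulmxA (map_mx toC u)) -SC_diag -map_mxM uS map_mxZ -scalemxAl.
by move/(congr1 (fun M : 'rV[C]_N => M 0 j)); rewrite mul_mx_diag !mxE.
Qed.

Lemma above_second_unique (t : seq R) :
  char_poly S = \prod_(y <- t) ('X - y%:P) -> sorted (fun x y => y <= x) t ->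
  forall j l, toC t`_1 < d 0 j -> toC t`_1 < d 0 l -> j = l.
Proof.
move=> charS t_sorted j l hj hl; apply/eqP; apply: contraTT (count_gt_second t_sorted).
move=> jl; rewrite -ltnNge.
have : (1 < #|[pred k : 'I_N | (toC t`_1 < d 0 k)%R]|)%N.
  by apply/card_gt1P; exists j, l; rewrite !inE hj hl.
rewrite (count_eigenvalues _ charS) count_map.
by rewrite (eq_count (a2 := fun w => t`_1 < w)) // => w /=; rewrite ltcR.
Qed.

Theorem orth_quad_le_second (t : seq R) (u : 'rV[R]_N) :
  char_poly S = \prod_(y <- t) ('X - y%:P) -> sorted (fun x y => y <= x) t ->
  u != 0 -> u *m S = u ->
  (forall y : 'rV[R]_N, (y *m S *m y^T) 0 0 <= 1 * (y *m y^T) 0 0) ->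
  forall y : 'rV[R]_N, (y *m u^T) 0 0 = 0 ->
    (y *m S *m y^T) 0 0 <= t`_1 * (y *m y^T) 0 0.
Proof.
move=> charS t_sorted u_nz uS S_le1 y y_orth.
pose yC := map_mx toC y; pose uC := map_mx toC u.
suff coord_le l : coord yC 0 l != 0 -> d 0 l <= toC t`_1.
  have real_entry (A : 'M[R]_1) : map_mx toC A 0 0 = toC (A 0 0) by rewrite mxE.
  by have := quad_upper coord_le; rewrite conj_real_row -!map_mxM !real_entry -rmorphM lecR.
(* Otherwise d_l is the unique eigenvalue above t`_1 and d_l <= 1, so no other
   eigenvalue equals 1 and u lies along direction l, along which y has a
   non-zero component: y and u cannot be orthogonal. *)
move=> yl_nz; have [z _ dl_z] := eigenvalue_real charS l.
rewrite dl_z lecR leNgt; apply/negP => t1_lt_z.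
have above_l : toC t`_1 < d 0 l by rewrite dl_z ltcR.
have dl_le1 : d 0 l <= 1 by rewrite -(rmorph1 toC); exact: eigenvalue_le.
have uC_coord j : j != l -> coord uC 0 j = 0.
  move=> jl; have uS1 : u *m S = 1 *: u by rewrite scale1r.
  move: (eigenvector_coord uS1 j); rewrite rmorph1 mul1r.
  move/eqP; rewrite -subr_eq0 -{2}[coord uC 0 j]mulr1 -mulrBr mulf_eq0.
  case/orP => [/eqP //|]; rewrite subr_eq0 => /eqP dj1.
  have above_j : toC t`_1 < d 0 j by rewrite dj1 (lt_le_trans above_l dl_le1).
  by rewrite (above_second_unique charS t_sorted above_j above_l) eqxx in jl.
have uC_l : coord uC 0 l != 0.
  apply: contraNneq u_nz => ul0; rewrite -(map_mx_eq0 toC); apply/eqP.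
  have coord0 : coord uC = 0.
    by apply/rowP => j; rewrite [RHS]mxE; case: (eqVneq j l) => [->|/uC_coord].
  by rewrite -/uC -[uC]mulmx1 -spectral_PtP mulmxA coord0 mul0mx.
have : (yC *m uC^t*) 0 0 = 0 by rewrite conj_real_row -map_mxM mxE y_orth rmorph0.
rewrite inner_coord (bigD1 l) //= big1 => [|j jl]; last by rewrite uC_coord ?conjC0 ?mulr0.
by rewrite addr0 => /eqP; rewrite mulf_eq0 conjC_eq0 (negbTE yl_nz) (negbTE uC_l).
Qed.

End RealSymmetricSpectrum.

Lemma gram_spectrum (R : rcfType) (N : nat) (M : 'M[R]_N) (s : seq R) :
  singular_values M s ->
  [/\ char_poly (M^T *m M) = \prod_(y <- [seq x ^+ 2 | x <- s]) ('X - y%:P),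
      sorted (fun x y => y <= x) [seq x ^+ 2 | x <- s] &
      [seq x ^+ 2 | x <- s]`_1 = s`_1 ^+ 2].
Proof.
case=> s_sorted s_ge0 charM; split; first by rewrite big_map.
  apply: (homo_sorted_in (P := fun x => 0 <= x)) s_sorted => [x y x0 y0 /= yx|].
    by rewrite ler_pXn2r.
  exact: s_ge0.
by case: s {s_sorted s_ge0 charM} => [|a [|b r]] //=; rewrite expr0n.
Qed.

Lemma sigma2_ge0 (R : rcfType) (N : nat) (M : 'M[R]_N) (s : seq R) :
  singular_values M s -> 0 <= sigma2_of s.
Proof.
case=> _ s_ge0 _; rewrite /sigma2_of.
have [s_gt1|s_le1] := ltnP 1 (size s); last by rewrite nth_default.
by apply: (allP s_ge0); rewrite mem_nth.
Qed.

Section FunctionsOnFiniteType.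
(* A kernel f : T -> T -> R acts on functions x : T -> R by (app f x) t =
   \sum_y f t y * x y; mx_of f is the matrix of this action once T is
   enumerated, so bounds on singular values of mx_of f are statements about
   the squared norms sqnorm (app f x). *)
Variables (R : rcfType) (T : finType).

Definition app (f : T -> T -> R) (x : T -> R) (t : T) : R := \sum_y f t y * x y.
Definition sqnorm (x : T -> R) : R := \sum_t x t ^+ 2.

Lemma sqnorm_ge0 (x : T -> R) : 0 <= sqnorm x.
Proof. by apply: sumr_ge0 => t _; rewrite sqr_ge0. Qed.

Lemma sqnorm_eq (x x' : T -> R) : x =1 x' -> sqnorm x = sqnorm x'.
Proof. by move=> h; apply: eq_bigr => t _; rewrite h. Qed.

Lemma app_eq f (x x' : T -> R) : x =1 x' -> app f x =1 app f x'.
Proof. by move=> h t; apply: eq_bigr => y _; rewrite h. Qed.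

Lemma app_add f (x x' : T -> R) : app f (fun t => x t + x' t) =1 (fun t => app f x t + app f x' t).
Proof. by move=> t; rewrite /app -big_split /=; apply: eq_bigr => y _; rewrite mulrDr. Qed.

Lemma sqnorm_add_le (x x' : T -> R) :
  sqnorm (fun t => x t + x' t) <= 2 * sqnorm x + 2 * sqnorm x'.
Proof.
rewrite /sqnorm !mulr_sumr -big_split /=; apply: ler_sum => t _.
have := sqr_ge0 (x t - x' t); set a := x t; set b := x' t => h.
by rewrite -subr_ge0; move: h; congr (0 <= _); ring.
Qed.

Local Notation vec y := (fun t => y 0 (enum_rank t)).

Lemma sum_enum (F : 'I_#|T| -> R) : \sum_i F i = \sum_t F (enum_rank t).
Proof.
rewrite (reindex enum_rank) //.
by exists enum_val => i _; [exact: enum_rankK | exact: enum_valK].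
Qed.

Lemma gram_quad (f : T -> T -> R) (y : 'rV[R]_#|T|) :
  (y *m ((mx_of f)^T *m mx_of f) *m y^T) 0 0 = sqnorm (app f (vec y)).
Proof.
have -> : y *m ((mx_of f)^T *m mx_of f) *m y^T =
    (y *m (mx_of f)^T) *m (y *m (mx_of f)^T)^T by rewrite trmx_mul trmxK !mulmxA.
rewrite mxE /sqnorm sum_enum; apply: eq_bigr => t _; rewrite !mxE expr2.
by congr (_ * _); rewrite /app sum_enum; apply: eq_bigr => z _; rewrite !mxE !enum_rankK mulrC.
Qed.

Lemma row_sqnorm (y : 'rV[R]_#|T|) : (y *m y^T) 0 0 = sqnorm (vec y).
Proof. by rewrite mxE /sqnorm sum_enum; apply: eq_bigr => t _; rewrite !mxE expr2. Qed.

Lemma row_sum (y : 'rV[R]_#|T|) :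
  (y *m (const_mx 1 : 'rV[R]_#|T|)^T) 0 0 = \sum_t vec y t.
Proof. by rewrite mxE sum_enum; apply: eq_bigr => t _; rewrite !mxE mulr1. Qed.

Lemma vec_row (x : T -> R) : vec (\row_k x (enum_val k)) =1 x.
Proof. by move=> t; rewrite /= mxE enum_rankK. Qed.

Lemma gram_sym (f : T -> T -> R) : ((mx_of f)^T *m mx_of f)^T = (mx_of f)^T *m mx_of f.
Proof. by rewrite trmx_mul trmxK. Qed.

Lemma sigma2_le (f : T -> T -> R) (s : seq R) (k : R) :
  singular_values (mx_of f) s -> 0 <= k ->
  (forall x : T -> R, \sum_t x t = 0 -> sqnorm (app f x) <= k ^+ 2 * sqnorm x) ->
  sigma2_of s <= k.
Proof.
move=> sv k_ge0 hk; have [charG sortedG sq1] := gram_spectrum sv.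
rewrite -(ler_pXn2r (n := 2)) ?nnegrE ?(sigma2_ge0 sv) // -sq1.
apply: (second_eigenvalue_le (gram_sym f) (u := const_mx 1) charG sortedG (exprn_ge0 _ k_ge0)) => y.
by rewrite row_sum gram_quad row_sqnorm; apply: hk.
Qed.

Lemma doubly_stochastic_gap (f : T -> T -> R) (s : seq R) :
  singular_values (mx_of f) s ->
  (forall t, \sum_y f t y = 1) -> (forall y, \sum_t f t y = 1) ->
  (forall x : T -> R, sqnorm (app f x) <= sqnorm x) ->
  forall x : T -> R, \sum_t x t = 0 -> sqnorm (app f x) <= sigma2_of s ^+ 2 * sqnorm x.
Proof.
move=> sv rows cols contr x x_sum.
have [t0 _|T0] := pickP (fun _ : T => true); last first.
  by rewrite /sqnorm !big_pred0 ?mulr0 // => t; rewrite T0.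
have [charG sortedG sq1] := gram_spectrum sv.
pose u := (const_mx 1 : 'rV[R]_#|T|).
have u_nz : u != 0.
  by apply: contraTneq isT => /rowP /(_ (enum_rank t0)); rewrite !mxE => /eqP; rewrite oner_eq0.
have uG : u *m ((mx_of f)^T *m mx_of f) = u.
  have uMt : u *m (mx_of f)^T = u.
    apply/rowP => i; rewrite !mxE -[RHS](rows (enum_val i)) sum_enum.
    by apply: eq_bigr => t _; rewrite !mxE enum_rankK mul1r.
  rewrite mulmxA uMt; apply/rowP => j; rewrite !mxE -[RHS](cols (enum_val j)) sum_enum.
  by apply: eq_bigr => t _; rewrite !mxE enum_rankK mul1r.
have gram_le1 (y : 'rV[R]_#|T|) :
    (y *m ((mx_of f)^T *m mx_of f) *m y^T) 0 0 <= 1 * (y *m y^T) 0 0.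
  by rewrite gram_quad row_sqnorm mul1r; exact: contr.
have := orth_quad_le_second (gram_sym f) charG sortedG u_nz uG gram_le1
  (y := \row_k x (enum_val k)).
rewrite /sigma2_of -sq1 gram_quad row_sqnorm row_sum (sqnorm_eq (vec_row x)).
rewrite (sqnorm_eq (app_eq f (vec_row x))); apply.
by rewrite -[RHS]x_sum; apply: eq_bigr => t _; rewrite vec_row.
Qed.

Lemma jensen_sq (w x : T -> R) : (forall y, 0 <= w y) -> \sum_y w y = 1 ->
  (\sum_y w y * x y) ^+ 2 <= \sum_y w y * x y ^+ 2.
Proof.
move=> w_ge0 w_sum; set m := \sum_y w y * x y.
have var_ge0 : 0 <= \sum_y w y * (x y - m) ^+ 2.
  by apply: sumr_ge0 => y _; rewrite mulr_ge0 ?sqr_ge0.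
have var_eq : \sum_y w y * (x y - m) ^+ 2 = \sum_y (w y * x y ^+ 2) +
    \sum_y (- (2 * m) * (w y * x y)) + \sum_y (m ^+ 2 * w y).
  by rewrite -!big_split /=; apply: eq_bigr => y _; ring.
rewrite -!mulr_sumr -/m w_sum in var_eq.
by rewrite var_eq in var_ge0; nra.
Qed.

Lemma doubly_stochastic_contract (f : T -> T -> R) : (forall t y, 0 <= f t y) ->
  (forall t, \sum_y f t y = 1) -> (forall y, \sum_t f t y = 1) ->
  forall x, sqnorm (app f x) <= sqnorm x.
Proof.
move=> f_ge0 rows cols x; rewrite /sqnorm /app.
apply: le_trans (_ : \sum_t \sum_y f t y * x y ^+ 2 <= _).
  by apply: ler_sum => t _; apply: jensen_sq.
rewrite exchange_big /=; apply: ler_sum => y _.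
by rewrite -mulr_suml cols mul1r.
Qed.

End FunctionsOnFiniteType.

Lemma sum_delta (R : nzRingType) (T : finType) (a : T) (F : T -> R) :
  \sum_v ((a == v)%:R * F v) = F a.
Proof.
rewrite (bigD1 a) //= eqxx mul1r big1 ?addr0 // => v va.
by rewrite eq_sym (negbTE va) mul0r.
Qed.

Lemma card_set_sum (R : nzRingType) (T : finType) (P : pred T) :
  (#|[set j | P j]|%:R : R) = \sum_j (P j)%:R.
Proof.
rewrite -sum1_card natr_sum big_mkcond /=; apply: eq_bigr => j _.
by rewrite inE; case: (P j).
Qed.

Section ZigZag.
(* A
   "cloud" is a fibre {v} x V(H); cloud_mean averages a function over clouds. *)
Variable R : rcfType.
Variables (n d' s d2 : nat).
Local Notation d1 := d'.+1.
Variable rot : 'I_n * 'I_d1 -> 'I_n * 'I_d1.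
Hypothesis rot_invol : forall vj, rot (rot vj) = vj.
Variable E : Hvert d1 s -> Hvert d1 s -> nat.
Hypothesis E_sym : forall a b, E a b = E b a.
Hypothesis E_reg : forall a, (\sum_b E a b)%N = d2.
Hypothesis d2_gt0 : (0 < d2)%N.
Variable i : 'I_s.
Local Notation V := 'I_n.
Local Notation W := (Hvert d1 s).
Local Notation T := ('I_n * Hvert d1 s)%type.
Local Notation AG := (adjG R rot).
Local Notation AH := (adjH R d2 E).
Local Notation IH := (IkronH R d2 E).
Local Notation Gmx := (Gi R rot i).
Local Notation K := (#|{: W}|%:R : R).

Lemma sum_pair (F : T -> R) : \sum_t F t = \sum_v \sum_w F (v, w).
Proof. by rewrite pair_big /=; apply: eq_bigr => -[]. Qed.

Lemma sqnorm_pair (z : T -> R) : sqnorm z = \sum_v sqnorm (fun w => z (v, w)).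
Proof. by rewrite /sqnorm sum_pair. Qed.

Lemma K_gt0 : 0 < K.
Proof. by rewrite ltr0n; apply/card_gt0P; exists [ffun _ => ord0]. Qed.

Lemma sum_const_W (c : R) : \sum_(w : W) c = c * K.
Proof. by rewrite sumr_const mulr_natr. Qed.

Lemma sqnorm_lift (q : V -> R) : sqnorm (fun t : T => q t.1) = K * sqnorm q.
Proof.
by rewrite sqnorm_pair /sqnorm mulr_sumr; apply: eq_bigr => v _ /=; rewrite sum_const_W mulrC.
Qed.

Lemma Rot_invol t : Rot rot i (Rot rot i t) = t.
Proof.
case: t => v a; rewrite /Rot /= ffunE eqxx -surjective_pairing rot_invol /=.
by congr (_, _); apply/ffunP => k; rewrite !ffunE; case: eqP => [->|].
Qed.

Lemma app_Gi (z : T -> R) t : app Gmx z t = z (Rot rot i t).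
Proof.
rewrite /app (bigD1 (Rot rot i t)) //= big1 ?addr0 /Gi ?eqxx ?mul1r //.
by move=> y ny; rewrite eq_sym (negbTE ny) mul0r.
Qed.

Lemma sqnorm_Gi (z : T -> R) : sqnorm (app Gmx z) = sqnorm z.
Proof.
rewrite /sqnorm; under eq_bigr do rewrite app_Gi.
by rewrite [RHS](reindex_inj (can_inj Rot_invol)).
Qed.

Lemma app_IH (z : T -> R) v w : app IH z (v, w) = \sum_w' AH w w' * z (v, w').
Proof.
rewrite /app sum_pair (bigD1 v) //= [X in _ + X]big1 ?addr0.
  by apply: eq_bigr => w' _; rewrite /IkronH /= eqxx mul1r.
by move=> v' nv; apply: big1 => w' _; rewrite /IkronH /= eq_sym (negbTE nv) !mul0r.
Qed.

Lemma app_zigzag (x : T -> R) :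
  app (zigzag_i R d2 rot E i) x =1 app IH (app Gmx (app IH x)).
Proof.
move=> t; rewrite /app /zigzag_i.
under eq_bigr do rewrite big_distrl /=.
under [RHS]eq_bigr do rewrite big_distrr /=.
rewrite exchange_big; apply: eq_bigr => z _.
under eq_bigr do rewrite big_distrl /=.
under [RHS]eq_bigr do rewrite mulrA big_distrr /=.
by rewrite exchange_big; apply: eq_bigr => w _; under [RHS]eq_bigr do rewrite mulrA.
Qed.

Lemma AH_ge0 a b : 0 <= AH a b.
Proof. by rewrite /adjH divr_ge0 ?ler0n. Qed.

Lemma AH_row a : \sum_b AH a b = 1.
Proof. by rewrite /adjH -mulr_suml -natr_sum E_reg divff // pnatr_eq0 -lt0n. Qed.

Lemma AH_col b : \sum_a AH a b = 1.
Proof. by rewrite -(AH_row b); apply: eq_bigr => a _; rewrite /adjH E_sym. Qed.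

Lemma app_AG (c : V -> R) v : app AG c v = (\sum_j c (rot (v, j)).1) / d1%:R.
Proof.
rewrite /app /adjG; under eq_bigr do rewrite card_set_sum mulrAC.
rewrite -mulr_suml; congr (_ / _); under eq_bigr do rewrite mulr_suml.
by rewrite exchange_big /=; apply: eq_bigr => j _; exact: sum_delta.
Qed.

Lemma AG_ge0 v v' : 0 <= AG v v'.
Proof. by rewrite /adjG divr_ge0 ?ler0n. Qed.

Lemma AG_row v : \sum_v' AG v v' = 1.
Proof.
have delta_sum (j : 'I_d1) : \sum_v' (((rot (v, j)).1 == v')%:R : R) = 1.
  by rewrite -[RHS](sum_delta (rot (v, j)).1 (fun=> 1)); apply: eq_bigr => v' _; rewrite mulr1.
rewrite /adjG -mulr_suml; under eq_bigr do rewrite card_set_sum.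
rewrite exchange_big /=; under eq_bigr do rewrite delta_sum.
by rewrite sumr_const card_ord divff // pnatr_eq0.
Qed.

Lemma AG_col v' : \sum_v AG v v' = 1.
Proof.
rewrite /adjG -mulr_suml; under eq_bigr do rewrite card_set_sum.
rewrite pair_big /=; under eq_bigr => p _ do rewrite -surjective_pairing.
rewrite (reindex_inj (can_inj rot_invol)) /=; under eq_bigr do rewrite rot_invol.
rewrite -(pair_bigA _ (fun (v : V) (_ : 'I_d1) => ((v == v')%:R : R))) /=.
rewrite (bigD1 v') //= [X in _ + X]big1 => [|v vv']; last by rewrite (negbTE vv') big1.
by rewrite eqxx sumr_const card_ord addr0 divff // pnatr_eq0.
Qed.

Definition cloud_mean (x : T -> R) (v : V) : R := (\sum_w x (v, w)) / K.

Lemma cloud_mean_zero (x : T -> R) v : \sum_w (x (v, w) - cloud_mean x v) = 0.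
Proof. by rewrite sumrB sum_const_W /cloud_mean mulfVK ?subrr // gt_eqF ?K_gt0. Qed.

Lemma sqnorm_cloud_split (x : T -> R) :
  sqnorm x = sqnorm (fun t : T => cloud_mean x t.1) +
             sqnorm (fun t : T => x t - cloud_mean x t.1).
Proof.
rewrite !sqnorm_pair -big_split /=; apply: eq_bigr => v _; rewrite /sqnorm -big_split /=.
have -> : \sum_w x (v, w) ^+ 2 = \sum_w (cloud_mean x v ^+ 2 +
    (x (v, w) - cloud_mean x v) ^+ 2 + 2 * cloud_mean x v * (x (v, w) - cloud_mean x v)).
  by apply: eq_bigr => w _; ring.
by rewrite big_split /= -mulr_sumr cloud_mean_zero mulr0 addr0.
Qed.

Lemma IH_cloud_const (q : V -> R) : app IH (fun t : T => q t.1) =1 (fun t : T => q t.1).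
Proof. by case=> v w; rewrite app_IH /= -mulr_suml AH_row mul1r. Qed.

Lemma cloud_mean_IH (z : T -> R) v : cloud_mean (app IH z) v = cloud_mean z v.
Proof.
rewrite /cloud_mean; congr (_ / _); under eq_bigr do rewrite app_IH.
by rewrite exchange_big /=; apply: eq_bigr => w' _; rewrite -mulr_suml AH_col mul1r.
Qed.

Lemma sqnorm_IH (z : T -> R) :
  sqnorm (app IH z) = \sum_v sqnorm (app AH (fun w => z (v, w))).
Proof.
by rewrite sqnorm_pair; apply: eq_bigr => v _; apply: eq_bigr => w _; rewrite app_IH.
Qed.

Lemma IH_contract (z : T -> R) : sqnorm (app IH z) <= sqnorm z.
Proof.
rewrite sqnorm_IH sqnorm_pair; apply: ler_sum => v _.
by apply: doubly_stochastic_contract; [exact: AH_ge0 | exact: AH_row | exact: AH_col].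
Qed.

(* Along the coordinate i, the vertices of H are equidistributed on [d1]:
   shifting that coordinate is a bijection of V(H). *)
Lemma sum_coord (h : 'I_d1 -> R) : \sum_(w : W) h (w i) * d1%:R = K * \sum_j h j.
Proof.
have shift (r : 'I_d1) : \sum_(w : W) h (w i) = \sum_(w : W) h (w i + r).
  have shift_inj : injective (fun w : W => [ffun k => w k + r] : W).
    by move=> w1 w2 /ffunP e; apply/ffunP => k; have := e k; rewrite !ffunE; exact: addIr.
  by rewrite [LHS](reindex_inj shift_inj) /=; apply: eq_bigr => w _; rewrite ffunE.
rewrite -mulr_suml mulr_natr -[in X in _ *+ X](card_ord d1) -sumr_const.
under eq_bigr => r _ do rewrite (shift r).
rewrite exchange_big /= mulrC -sum_const_W; apply: eq_bigr => w _.
by rewrite [RHS](reindex_inj (addrI (w i))).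
Qed.

Lemma cloud_mean_Gi (c : V -> R) v :
  cloud_mean (app Gmx (fun t : T => c t.1)) v = app AG c v.
Proof.
rewrite app_AG /cloud_mean; under eq_bigr do rewrite app_Gi /=.
have d1_neq0 : (d1%:R : R) != 0 by rewrite pnatr_eq0.
have cloud_sum : \sum_(w : W) c (rot (v, w i)).1 = K * (\sum_j c (rot (v, j)).1) / d1%:R.
  by rewrite -(sum_coord (fun j => c (rot (v, j)).1)) -mulr_suml (mulfK d1_neq0).
by rewrite cloud_sum mulrAC [K * _]mulrC mulfK // gt_eqF ?K_gt0.
Qed.

Section SpectralBounds.
Variable lam : R.
Hypothesis AH_gap : forall y : W -> R, \sum_w y w = 0 ->
  sqnorm (app AH y) <= lam ^+ 2 * sqnorm y.
Hypothesis AG_gap : forall c : V -> R, \sum_v c v = 0 ->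
  sqnorm (app AG c) <= lam ^+ 2 * sqnorm c.

Lemma IH_gap (z : T -> R) : (forall v, \sum_w z (v, w) = 0) ->
  sqnorm (app IH z) <= lam ^+ 2 * sqnorm z.
Proof.
move=> z_sum; rewrite sqnorm_IH sqnorm_pair mulr_sumr.
by apply: ler_sum => v _; exact: AH_gap.
Qed.

Lemma IH_bound (z : T -> R) :
  sqnorm (app IH z) <= sqnorm (fun t : T => cloud_mean z t.1) + lam ^+ 2 * sqnorm z.
Proof.
rewrite sqnorm_cloud_split (sqnorm_eq (fun t => cloud_mean_IH z t.1)) lerD2l.
have rest_eq : (fun t => app IH z t - cloud_mean (app IH z) t.1) =1
    app IH (fun t : T => z t - cloud_mean z t.1).
  move=> t; rewrite cloud_mean_IH -(IH_cloud_const (cloud_mean z) t) /app -sumrB.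
  by apply: eq_bigr => y _; rewrite mulrBr.
rewrite (sqnorm_eq rest_eq); apply: le_trans (IH_gap _) _ => [v|].
  exact: cloud_mean_zero.
rewrite ler_wpM2l ?sqr_ge0 // [X in _ <= X]sqnorm_cloud_split lerDr.
exact: sqnorm_ge0.
Qed.

Lemma Gi_cloud_gap (c : V -> R) : \sum_v c v = 0 ->
  sqnorm (fun t : T => cloud_mean (app Gmx (fun t : T => c t.1)) t.1) <=
  lam ^+ 2 * sqnorm (fun t : T => c t.1).
Proof.
move=> c_sum; rewrite (sqnorm_lift (cloud_mean _)) sqnorm_lift.
rewrite (sqnorm_eq (cloud_mean_Gi c)) mulrCA.
by rewrite ler_wpM2l ?(ltW K_gt0) //; exact: AG_gap.
Qed.

Theorem zigzag_gap (x : T -> R) : \sum_t x t = 0 ->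
  sqnorm (app (zigzag_i R d2 rot E i) x) <= (2 * lam) ^+ 2 * sqnorm x.
Proof.
move=> x_sum.
pose p := fun t : T => cloud_mean x t.1.
pose r := fun t : T => x t - cloud_mean x t.1.
have x_split : app IH x =1 (fun t => p t + app IH r t).
  move=> t; rewrite /p -(IH_cloud_const (cloud_mean x) t) -app_add.
  by apply: app_eq => y; rewrite /p /r subrKC.
have Mx_split : app (zigzag_i R d2 rot E i) x =1
    (fun t => app IH (app Gmx p) t + app IH (app Gmx (app IH r)) t).
  move=> t; rewrite app_zigzag -app_add; apply: app_eq => y.
  by rewrite !app_Gi x_split.
have p_bound : sqnorm (app IH (app Gmx p)) <= lam ^+ 2 * sqnorm p + lam ^+ 2 * sqnorm p.
  apply: le_trans (IH_bound _) _; rewrite sqnorm_Gi lerD2r.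
  by apply: Gi_cloud_gap; rewrite /cloud_mean -mulr_suml -sum_pair x_sum mul0r.
have r_bound : sqnorm (app IH (app Gmx (app IH r))) <= lam ^+ 2 * sqnorm r.
  apply: le_trans (IH_contract _) _; rewrite sqnorm_Gi.
  by apply: IH_gap => v; exact: cloud_mean_zero.
rewrite (sqnorm_eq Mx_split); apply: le_trans (sqnorm_add_le _ _) _.
have := sqnorm_ge0 p; have := sqnorm_ge0 r; have := sqr_ge0 lam.
rewrite (sqnorm_cloud_split x) -/p -/r; nra.
Qed.

End SpectralBounds.
End ZigZag.

Theorem mainTheorem9 (R : rcfType) (n d1 d2 s : nat)
  (rot : 'I_n * 'I_d1 -> 'I_n * 'I_d1) (phi : {perm 'I_d1})
  (E : Hvert d1 s -> Hvert d1 s -> nat)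
  (sG sH : seq R) :
  (0 < d1)%N -> (0 < d2)%N ->
  (* rot is a rotation map: an involution, locally invertible via phi *)
  (forall vj, rot (rot vj) = vj) ->
  (forall v j, (rot (v, j)).2 = phi j) ->
  (* H is an undirected d2-regular (multi)graph on [d1]^s *)
  (forall a b, E a b = E b a) ->
  (forall a, (\sum_b E a b)%N = d2) ->
  singular_values (mx_of (adjG R rot)) sG ->
  singular_values (mx_of (adjH R d2 E)) sH ->
  sigma2_of sG <= sigma2_of sH ->
  forall i : 'I_s, forall sM : seq R,
    singular_values (mx_of (zigzag_i R d2 rot E i)) sM ->
    sigma2_of sM <= 2 * sigma2_of sH.
Proof.
move=> d1_gt0; have [d' d1E] : exists d', d1 = d'.+1 by exists d1.-1; rewrite prednK.
subst d1 => d2_gt0 rot_invol _ E_sym E_reg svG svH sG_le_sH i sM svM.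
have AH_rows := AH_row R E_reg d2_gt0.
have AH_cols := AH_col R E_sym E_reg d2_gt0.
have AG_cols := AG_col R rot_invol.
have AH_gap := doubly_stochastic_gap svH AH_rows AH_cols
  (doubly_stochastic_contract (AH_ge0 R d2 E) AH_rows AH_cols).
have AG_gap := doubly_stochastic_gap svG (AG_row R rot) AG_cols
  (doubly_stochastic_contract (AG_ge0 R rot) (AG_row R rot) AG_cols).
have AG_gap_H c (c_sum : \sum_v c v = 0) :
    sqnorm (app (adjG R rot) c) <= sigma2_of sH ^+ 2 * sqnorm c.
  apply: le_trans (AG_gap c c_sum) (ler_wpM2r (sqnorm_ge0 c) _).
  by rewrite ler_pXn2r ?nnegrE ?(sigma2_ge0 svG) ?(sigma2_ge0 svH).
apply: (sigma2_le svM); first by rewrite mulr_ge0 ?ler0n ?(sigma2_ge0 svH).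
by move=> x; exact: zigzag_gap.
Qed.
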